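(* Let $\mathbb{K}$ be a skew field and $n\ge 2$. Every duality of $\mathsf{PG}(n,\mathbb{K})$ which is a polar $\{2,2'\}$-kangaroo is anisotropic.
   Context: A duality $\theta$ of $\mathsf{PG}(n,\mathbb{K})$ maps points to hyperplanes and hyperplanes to points (reversing incidence); it acts on incident point–hyperplane pairs by $(p,H)\mapsto(H^\theta,p^\theta)$. For incident pairs $(p,H),(p',H')$ the polar position is $2$ or $2'$ if and only if $p\neq p'$, $H\neq H'$, and ($p\in H'$ or $p'\in H$). $\theta$ is a polar $\{2,2'\}$-kangaroo if no pair is at position $2$ or $2'$ from its image. $\theta$ is anisotropic if it maps every chamber (complete flag) to an opposite chamber. *)

(* PG(n,K) over a skew field K is modelled as the lattice of
   (left) subspaces of the left K-vector space K^(n+1) = 'rV[K]_(n.+1). *)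
From mathcomp Require Import all_boot all_algebra.
Set Implicit Arguments. Unset Strict Implicit. Unset Printing Implicit Defensive.
Import GRing.Theory.
Local Open Scope ring_scope.

Section PG.
Variables (K : unitRingType) (n : nat).

Notation vec := 'rV[K]_(n.+1).
Definition vset := vec -> Prop.

Definition sub_eq (U W : vset) : Prop := forall x, U x <-> W x.
Definition sub_incl (U W : vset) : Prop := forall x, U x -> W x.

Definition subspace (U : vset) : Prop :=
  U 0 /\ (forall x y, U x -> U y -> U (x + y)) /\
  (forall (a : K) x, U x -> U (a *: x)).

Definition is_point (p : vset) : Prop :=
  exists v : vec, v != 0 /\ forall x, p x <-> exists a : K, x = a *: v.

Definition is_hyperplane (H : vset) : Prop :=
  exists c : 'cV[K]_(n.+1), c != 0 /\ forall x, H x <-> x *m c = 0.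

(* a duality (correlation): an inclusion-reversing bijection of the
   lattice of subspaces (up to extensional equality of sets) *)
Definition duality (th : vset -> vset) : Prop :=
  (forall U, subspace U -> subspace (th U)) /\
  (forall W, subspace W -> exists U, subspace U /\ sub_eq (th U) W) /\
  (forall U W, subspace U -> subspace W ->
     (sub_incl U W <-> sub_incl (th W) (th U))).

Definition pos_2_2' (p H p' H' : vset) : Prop :=
  ~ sub_eq p p' /\ ~ sub_eq H H' /\ (sub_incl p H' \/ sub_incl p' H).

(* no incident point-hyperplane pair is at position 2 or 2' from its image
   (p,H)^th = (H^th, p^th) *)
Definition polar_kangaroo_22' (th : vset -> vset) : Prop :=
  forall p H, is_point p -> is_hyperplane H -> sub_incl p H ->
    ~ pos_2_2' p H (th H) (th p).

(* chambers: complete flags V_1 < ... < V_n, with C i = V_(i+1) *)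
Definition chamber (C : 'I_n -> vset) : Prop :=
  (forall i, subspace (C i)) /\
  (forall i, exists x, C i x /\ x != 0) /\
  (forall i, exists x, ~ C i x) /\
  (forall i j : 'I_n, (i < j)%N -> sub_incl (C i) (C j) /\ ~ sub_incl (C j) (C i)).

Definition complementary (U W : vset) : Prop :=
  (forall x, U x -> W x -> x = 0) /\
  (forall x, exists y z, U y /\ W z /\ x = y + z).

Definition opposite (C D : 'I_n -> vset) : Prop :=
  forall i, complementary (C i) (D (rev_ord i)).

(* image of a chamber under a duality: (V_n^th < ... < V_1^th) *)
Definition dual_chamber (th : vset -> vset) (C : 'I_n -> vset) : 'I_n -> vset :=
  fun j => th (C (rev_ord j)).

Definition anisotropic (th : vset -> vset) : Prop :=
  forall C, chamber C -> opposite C (dual_chamber th C).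

End PG.

Definition skew_field (K : unitRingType) : Prop :=
  forall x : K, x != 0 -> x \is a GRing.unit.

(* A point p with p <= p^th would be at position 2 or 2' from (p, H)^th for
   every hyperplane H through p except H = p^th and the hyperplane with
   H^th = p; as n >= 2 there are at least three hyperplanes through p, so the
   kangaroo condition forbids absolute points.  For a duality without absolute
   points, U and U^th meet trivially (a point of U /\ U^th would be absolute),
   and U + U^th is everything: writing U + U^th = X^th, a point p of X would
   satisfy U, U^th <= p^th, hence p <= U <= p^th.  So every subspace is
   complementary to its image, and in particular every chamber is opposite
   to its image. *)
From mathcomp Require Import all_boot all_algebra.
From Stdlib Require Import Classical.
Set Implicit Arguments. Unset Strict Implicit. Unset Printing Implicit Defensive.
Import GRing.Theory.
Local Open Scope ring_scope.

Section Subspaces.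
Variables (K : unitRingType) (n : nat).
Notation vec := 'rV[K]_(n.+1).
Notation form := 'cV[K]_(n.+1).

Definition point_of (v : vec) : vset K n := fun x => exists a : K, x = a *: v.
Definition hyperplane_of (c : form) : vset K n := fun x => x *m c = 0.
Definition subspace_add (U W : vset K n) : vset K n :=
  fun x => exists y z, U y /\ W z /\ x = y + z.

Lemma hyperplane_subspace (H : vset K n) : is_hyperplane H -> subspace H.
Proof.
move=> [c [_ Hc]]; split; first by apply/Hc; rewrite mul0mx.
split; first by move=> x y /Hc x0 /Hc y0; apply/Hc; rewrite mulmxDl x0 y0 addr0.
by move=> a x /Hc x0; apply/Hc; rewrite -scalemxAl x0 scaler0.
Qed.

Definition hyperplane_through (v : vec) (H : vset K n) : Prop :=
  is_hyperplane H /\ sub_incl (point_of v) H.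

Lemma sub_eq_sym (X Y : vset K n) : sub_eq X Y -> sub_eq Y X.
Proof. by move=> eXY x; split=> /eXY. Qed.

Lemma sub_eq_trans (X Y Z : vset K n) : sub_eq X Y -> sub_eq Y Z -> sub_eq X Z.
Proof. by move=> eXY eYZ x; split=> [/eXY/eYZ|/eYZ/eXY]. Qed.

Lemma subspace_point_of (v : vec) : subspace (point_of v).
Proof.
split; first by exists 0; rewrite scale0r.
split; first by move=> _ _ [a ->] [b ->]; exists (a + b); rewrite scalerDl.
by move=> a _ [b ->]; exists (a * b); rewrite scalerA.
Qed.

Lemma point_of_sub (U : vset K n) (v : vec) :
  subspace U -> U v -> sub_incl (point_of v) U.
Proof. by move=> [_ [_ sUZ]] Uv _ [a ->]; apply: sUZ. Qed.

Lemma subspace_add_closed (U W : vset K n) :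
  subspace U -> subspace W -> subspace (subspace_add U W).
Proof.
move=> [U0 [UD UZ]] [W0 [WD WZ]].
split; first by exists 0, 0; rewrite addr0.
split.
  move=> _ _ [y1 [z1 [Uy1 [Wz1 ->]]]] [y2 [z2 [Uy2 [Wz2 ->]]]].
  by exists (y1 + y2), (z1 + z2); rewrite addrACA; split; [apply: UD|split; [apply: WD|]].
move=> a _ [y [z [Uy [Wz ->]]]]; exists (a *: y), (a *: z).
by rewrite scalerDr; split; [apply: UZ|split; [apply: WZ|]].
Qed.

Lemma hyperplane_of_unit (c : form) (m : 'I_n.+1) : hyperplane_of c 'e_m <-> c m 0 = 0.
Proof.
rewrite /hyperplane_of -rowE; split; first by move/rowP/(_ 0); rewrite !mxE.
by move=> cm0; apply/rowP => z; rewrite !mxE (ord1 z).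
Qed.

Lemma hyperplane_of_neq (a b : form) (m : 'I_n.+1) :
  a m 0 = 0 -> b m 0 != 0 -> ~ sub_eq (hyperplane_of a) (hyperplane_of b).
Proof.
move=> am0 /eqP bm0 eab; apply/bm0/hyperplane_of_unit/eab.
exact/hyperplane_of_unit.
Qed.

Lemma hyperplane_through_form (v : vec) (c : form) (m : 'I_n.+1) :
  c m 0 != 0 -> v *m c = 0 -> hyperplane_through v (hyperplane_of c).
Proof.
move=> cm0 vc0; split.
  by exists c; split=> //; apply: contraNneq cm0 => ->; rewrite mxE.
by move=> _ [a ->]; rewrite /hyperplane_of -scalemxAl vc0 scaler0.
Qed.

(* The form x |-> x_l - x_k v_k^-1 v_l vanishes at v and is the l-th
   coordinate form away from the k-th coordinate. *)
Definition coord_form (v : vec) (k l : 'I_n.+1) : form :=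
  \col_m ((m == l)%:R - (m == k)%:R * ((v 0 k)^-1 * v 0 l)).

Lemma coord_formE (v : vec) (k l m : 'I_n.+1) :
  m != k -> coord_form v k l m 0 = (m == l)%:R.
Proof. by move=> mk; rewrite mxE (negbTE mk) mul0r subr0. Qed.

Lemma coord_form_orth (v : vec) (k l : 'I_n.+1) :
  v 0 k \is a GRing.unit -> l != k -> v *m coord_form v k l = 0.
Proof.
move=> vk_unit lk; apply/rowP => z; rewrite !mxE.
rewrite (bigD1 l) //= (bigD1 k) 1?eq_sym //= big1 => [|m /andP[ml mk]].
  rewrite !mxE eqxx (negbTE lk) eq_sym (negbTE lk) eqxx !mul0r subr0 mul1r mulr1.
  by rewrite sub0r mulrN mulrA mulrV // mul1r addr0 subrr.
by rewrite mxE (negbTE ml) (negbTE mk) mul0r subr0 mulr0.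
Qed.

Lemma exists_two_other_indices (k : 'I_n.+1) : (2 <= n)%N ->
  exists i j : 'I_n.+1, [/\ i != k, j != k & i != j].
Proof.
move=> n_ge2.
have lt0 : (0 < n.+1)%N by [].
have lt1 : (1 < n.+1)%N by rewrite ltnS (leq_trans _ n_ge2).
have lt2 : (2 < n.+1)%N by rewrite ltnS.
case: k => [[|[|k]] ltk].
- by exists (Ordinal lt1), (Ordinal lt2); split; rewrite -val_eqE.
- by exists (Ordinal lt0), (Ordinal lt2); split; rewrite -val_eqE.
- by exists (Ordinal lt0), (Ordinal lt1); split; rewrite -val_eqE.
Qed.

Lemma three_hyperplanes_through (v : vec) : skew_field K -> (2 <= n)%N ->
  v != 0 -> exists H1 H2 H3,
    [/\ hyperplane_through v H1, hyperplane_through v H2 & hyperplane_through v H3]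
    /\ [/\ ~ sub_eq H1 H2, ~ sub_eq H1 H3 & ~ sub_eq H2 H3].
Proof.
move=> skewK n_ge2 v_neq0.
have [k vk0] : exists k, v 0 k != 0.
  apply: NNPP => vk0; move/eqP: v_neq0; apply; apply/rowP => z; rewrite mxE.
  by apply/eqP/negPn/negP => vz0; apply: vk0; exists z.
have [i [j [ik jk ij]]] := exists_two_other_indices k n_ge2.
have vk_unit := skewK _ vk0.
set ci := coord_form v k i; set cj := coord_form v k j.
have ci_i : ci i 0 = 1 by rewrite coord_formE // eqxx.
have ci_j : ci j 0 = 0 by rewrite coord_formE // eq_sym (negbTE ij).
have cj_i : cj i 0 = 0 by rewrite coord_formE // (negbTE ij).
have cj_j : cj j 0 = 1 by rewrite coord_formE // eqxx.
have cij_i : (ci + cj) i 0 = 1 by rewrite mxE ci_i cj_i addr0.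
have cij_j : (ci + cj) j 0 = 1 by rewrite mxE ci_j cj_j add0r.
have vci : v *m ci = 0 by apply: coord_form_orth.
have vcj : v *m cj = 0 by apply: coord_form_orth.
have one_neq0 := oner_neq0 K.
exists (hyperplane_of ci), (hyperplane_of cj), (hyperplane_of (ci + cj)); split.
  split; [apply: (hyperplane_through_form (m := i)); rewrite ?ci_i //
         |apply: (hyperplane_through_form (m := j)); rewrite ?cj_j //
         |apply: (hyperplane_through_form (m := i)); rewrite ?cij_i //].
  by rewrite mulmxDr vci vcj addr0.
split; [apply: (hyperplane_of_neq (m := j)); rewrite ?ci_j ?cj_j //
       |apply: (hyperplane_of_neq (m := j)); rewrite ?ci_j ?cij_j //
       |apply: (hyperplane_of_neq (m := i)); rewrite ?cj_i ?cij_i //].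
Qed.

Lemma exists_avoiding (P A B : vset K n -> Prop) H1 H2 H3 :
  (forall X Y, P X -> P Y -> A X -> A Y -> sub_eq X Y) ->
  (forall X Y, P X -> P Y -> B X -> B Y -> sub_eq X Y) ->
  [/\ P H1, P H2 & P H3] -> [/\ ~ sub_eq H1 H2, ~ sub_eq H1 H3 & ~ sub_eq H2 H3] ->
  exists H, [/\ P H, ~ A H & ~ B H].
Proof.
move=> uniqA uniqB [PH1 PH2 PH3] [n12 n13 n23].
have avoid X Y Z (C D : vset K n -> Prop) :
    (forall X Y, P X -> P Y -> C X -> C Y -> sub_eq X Y) ->
    (forall X Y, P X -> P Y -> D X -> D Y -> sub_eq X Y) ->
    P X -> P Y -> P Z -> C X -> ~ sub_eq X Y -> ~ sub_eq X Z -> ~ sub_eq Y Z ->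
    exists H, [/\ P H, ~ C H & ~ D H].
  move=> uniqC uniqD PX PY PZ CX nXY nXZ nYZ.
  have nCY : ~ C Y by move=> CY; apply: nXY; apply: uniqC.
  have nCZ : ~ C Z by move=> CZ; apply: nXZ; apply: uniqC.
  case: (classic (D Y)) => [DY|nDY]; last by exists Y.
  by exists Z; split=> // DZ; apply: nYZ; apply: uniqD.
case: (classic (A H1)) => [AH1|nAH1]; first exact: (avoid H1 H2 H3 A B).
case: (classic (B H1)) => [BH1|nBH1]; last by exists H1.
have [H [PH nBH nAH]] := avoid H1 H2 H3 B A uniqB uniqA PH1 PH2 PH3 BH1 n12 n13 n23.
by exists H.
Qed.

End Subspaces.

Section Duality.
Variables (K : unitRingType) (n : nat) (th : vset K n -> vset K n).
Hypothesis th_duality : duality th.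

Lemma duality_subspace (U : vset K n) : subspace U -> subspace (th U).
Proof. by case: th_duality => thS _; apply: thS. Qed.

Lemma duality_surj (W : vset K n) : subspace W -> exists U, subspace U /\ sub_eq (th U) W.
Proof. by case: th_duality => _ [surj _]; apply: surj. Qed.

Lemma duality_incl (U W : vset K n) :
  subspace U -> subspace W -> sub_incl U W -> sub_incl (th W) (th U).
Proof. by case: th_duality => _ [_ rev] sU sW; apply: (proj1 (rev _ _ sU sW)). Qed.

Lemma duality_incl_rev (U W : vset K n) :
  subspace U -> subspace W -> sub_incl (th W) (th U) -> sub_incl U W.
Proof. by case: th_duality => _ [_ rev] sU sW; apply: (proj2 (rev _ _ sU sW)). Qed.

Lemma duality_inj (U W : vset K n) :
  subspace U -> subspace W -> sub_eq (th U) (th W) -> sub_eq U W.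
Proof.
move=> sU sW eUW x; split; move: x; apply: duality_incl_rev => // x /eUW //.
Qed.

Lemma kangaroo_no_absolute_point (v : 'rV[K]_(n.+1)) : skew_field K -> (2 <= n)%N ->
  polar_kangaroo_22' th -> v != 0 -> ~ sub_incl (point_of v) (th (point_of v)).
Proof.
move=> skewK n_ge2 kangaroo v_neq0 p_abs.
have [H1 [H2 [H3 [through distinct]]]] := three_hyperplanes_through skewK n_ge2 v_neq0.
have [H [[hypH pH] nH_pth nHth_p]] := exists_avoiding
  (A := fun X => sub_eq X (th (point_of v)))
  (B := fun X => sub_eq (point_of v) (th X))
  (fun X Y _ _ eX eY => sub_eq_trans eX (sub_eq_sym eY))
  (fun X Y PX PY eX eY => duality_inj (hyperplane_subspace (proj1 PX))
     (hyperplane_subspace (proj1 PY)) (sub_eq_trans (sub_eq_sym eX) eY))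
  through distinct.
apply: (kangaroo (point_of v) H) => //; first by exists v.
by split=> //; split=> //; left.
Qed.

Section NoAbsolutePoints.
Hypothesis no_absolute : forall v : 'rV[K]_(n.+1),
  v != 0 -> ~ sub_incl (point_of v) (th (point_of v)).

Lemma duality_meet_trivial (U : vset K n) x : subspace U -> U x -> th U x -> x = 0.
Proof.
move=> sU Ux thUx; case: (eqVneq x 0) => // /no_absolute not_abs; exfalso; apply: not_abs.
have pU := point_of_sub sU Ux.
move=> y /(point_of_sub (duality_subspace sU) thUx).
exact: duality_incl (subspace_point_of x) sU pU y.
Qed.

Lemma duality_of_trivial_full (X : vset K n) :
  subspace X -> (forall x, X x -> x = 0) -> forall x, th X x.
Proof.
move=> sX X0 x.
have sT : subspace (fun _ : 'rV[K]_(n.+1) => True) by [].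
have [Y [sY thY_full]] := duality_surj sT.
have XY : sub_incl X Y by move=> y /X0 ->; case: sY.
by apply: (duality_incl sX sY XY); apply/thY_full.
Qed.

Lemma duality_join_full (U : vset K n) :
  subspace U -> forall x, subspace_add U (th U) x.
Proof.
move=> sU; have sthU := duality_subspace sU.
have [X [sX thX]] := duality_surj (subspace_add_closed sU sthU).
suff X0 : forall v, X v -> v = 0 by move=> x; apply/thX/duality_of_trivial_full.
move=> v Xv; case: (eqVneq v 0) => // /no_absolute not_abs; exfalso; apply: not_abs.
have sp := subspace_point_of v.
have thX_thp := duality_incl sp sX (point_of_sub sX Xv).
have U_thp : sub_incl U (th (point_of v)).
  move=> y Uy; apply/thX_thp/thX; exists y, 0.
  by rewrite addr0; split=> //; split=> //; case: sthU.
have thU_thp : sub_incl (th U) (th (point_of v)).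
  move=> z thUz; apply/thX_thp/thX; exists 0, z.
  by rewrite add0r; split=> //; case: sU.
by move=> y /(duality_incl_rev sp sU thU_thp) /U_thp.
Qed.

Lemma complementary_duality (U : vset K n) : subspace U -> complementary U (th U).
Proof.
move=> sU; split; first by move=> x; apply: duality_meet_trivial.
by move=> x; apply: duality_join_full.
Qed.

Lemma anisotropic_of_no_absolute : anisotropic th.
Proof.
move=> C [subC _] i; rewrite /dual_chamber rev_ordK.
exact: complementary_duality (subC i).
Qed.

End NoAbsolutePoints.

End Duality.

Theorem proposition4p3 (K : unitRingType) (n : nat) (th : vset K n -> vset K n) :
  skew_field K -> (2 <= n)%N ->
  duality th -> polar_kangaroo_22' th -> anisotropic th.
Proof.
move=> skewK n_ge2 th_duality kangaroo.
apply: anisotropic_of_no_absolute => // v.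
exact: kangaroo_no_absolute_point.
Qed.
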